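(* Let $T$ be a complete theory and $\varphi(x;y)$ a formula whose characteristic sequence $\langle P_n\rangle$ has an $(\omega,2)$-array. Then $\alpha(n)\geq\lfloor n/2\rfloor$ for all $n$.
   Context: The characteristic sequence: $P_n(y_1,\dots,y_n):=\exists x\bigwedge_{i\le n}\varphi(x;y_i)$, interpreted in a sufficiently saturated model of $T$; standing assumption $T\vdash\forall y\exists z\forall x(\varphi(x;z)\leftrightarrow\neg\varphi(x;y))$. An $(\omega,2)$-array is $\langle a^t_i:t<2,i<\omega\rangle\subseteq P_1$ such that for all $n<\omega$, $P_n(a^{t_1}_{i_1},\dots,a^{t_n}_{i_n})$ holds iff for all $j,\ell\le n$, $i_j=i_\ell$ implies $t_j=t_\ell$. For finite $X\subseteq P_1$, $\hat e(X)$ is the number of unordered pairs of distinct $x,y\in X$ with $\neg P_2(x,y)$, and $\alpha(n)=\max\{\hat e(X):X\subseteq P_1,|X|=n\}$. *)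

From Stdlib Require Import Arith List Classical ClassicalEpsilon.
Import ListNotations.

(* A formula phi(x;y) interpreted in a model: X is the sort of (tuples of) the
   object variable x, Y the sort of (tuples of) the parameter variable y,
   and phi : X -> Y -> Prop is its interpretation. *)

(* Characteristic sequence: P_n(y_1,...,y_n) := exists x, /\_i phi(x;y_i).
   A tuple (y_1,...,y_n) is represented by the list [y_1;...;y_n]. *)
Definition charP {X Y : Type} (phi : X -> Y -> Prop) (ys : list Y) : Prop :=
  exists x, forall y, In y ys -> phi x y.

Definition P1 {X Y : Type} (phi : X -> Y -> Prop) (y : Y) : Prop := charP phi [y].
Definition P2 {X Y : Type} (phi : X -> Y -> Prop) (y z : Y) : Prop := charP phi [y; z].

Definition has_negation_instances {X Y : Type} (phi : X -> Y -> Prop) : Prop :=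
  forall y, exists z, forall x, phi x z <-> ~ phi x y.

(* (omega,2)-array <a^t_i : t<2, i<omega>, with t<2 coded by bool.
   A finite sequence (a^{t_1}_{i_1},...,a^{t_n}_{i_n}) is coded by the list of
   index pairs [(t_1,i_1);...;(t_n,i_n)]. *)
Definition is_omega2_array {X Y : Type} (phi : X -> Y -> Prop)
    (a : bool -> nat -> Y) : Prop :=
  (forall t i, P1 phi (a t i)) /\
  (forall s : list (bool * nat),
     charP phi (map (fun p => a (fst p) (snd p)) s) <->
     (forall p q, In p s -> In q s -> snd p = snd q -> fst p = fst q)).

Definition has_omega2_array {X Y : Type} (phi : X -> Y -> Prop) : Prop :=
  exists a : bool -> nat -> Y, is_omega2_array phi a.

(* ehat(X): number of unordered pairs of distinct elements x,y of X with
   ~P_2(x,y); a finite set X is given by a duplicate-free list, so the pairs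
   are exactly the pairs of positions i < j. *)
Fixpoint ehat {X Y : Type} (phi : X -> Y -> Prop) (l : list Y) : nat :=
  match l with
  | [] => 0
  | y :: l' =>
      length (filter (fun z => if excluded_middle_informative (P2 phi y z)
                               then false else true) l')
      + ehat phi l'
  end.

Definition ehat_value {X Y : Type} (phi : X -> Y -> Prop) (n k : nat) : Prop :=
  exists l : list Y, NoDup l /\ length l = n /\ Forall (P1 phi) l /\ ehat phi l = k.

(* alpha(n) = max { ehat(X) : X subset of P_1, |X| = n } (chosen classically;
   defaults to 0 if this maximum does not exist). *)
Definition alpha {X Y : Type} (phi : X -> Y -> Prop) (n : nat) : nat :=
  epsilon (inhabits 0)
    (fun k => ehat_value phi n k /\ forall k', ehat_value phi n k' -> k' <= k).

(* The two entries a^0_i, a^1_i of a column of an (omega,2)-array are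
   inconsistent, while any two entries from different columns are consistent;
   in particular all entries are distinct elements of P_1.  Taking floor(n/2)
   full columns, plus one more entry when n is odd, gives an n-element subset
   of P_1 with at least floor(n/2) non-edges of P_2. *)

From Stdlib Require Import Arith List Lia Classical ClassicalEpsilon.
Import ListNotations.

Lemma bounded_nat_pred_has_max (P : nat -> Prop) (B k0 : nat) :
  P k0 -> (forall k, P k -> k <= B) -> exists k, P k /\ forall k', P k' -> k' <= k.
Proof.
  revert k0; induction B as [|B IHB]; intros k0 Pk0 bounded.
  - exists k0; split; [exact Pk0|]. intros k' Pk'. specialize (bounded _ Pk'). lia.
  - destruct (classic (P (S B))) as [PSB|notPSB].
    + exists (S B); split; assumption.
    + apply (IHB k0 Pk0). intros k Pk. specialize (bounded _ Pk).
      destruct (Nat.eq_dec k (S B)) as [->|]; [contradiction|lia].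
Qed.

Section Ehat.

Variables (X Y : Type) (phi : X -> Y -> Prop).

Lemma P2_refl (y : Y) : P1 phi y -> P2 phi y y.
Proof. intros [x Hx]. exists x. intros z [<-|[<-|[]]]; apply Hx; left; reflexivity. Qed.

Lemma ehat_le_cons (y : Y) (l : list Y) : ehat phi l <= ehat phi (y :: l).
Proof. simpl. lia. Qed.

Lemma ehat_cons2_not_P2 (y z : Y) (l : list Y) :
  ~ P2 phi y z -> S (ehat phi l) <= ehat phi (y :: z :: l).
Proof.
  intros notP2. simpl.
  destruct (excluded_middle_informative (P2 phi y z)); [contradiction|simpl; lia].
Qed.

Lemma ehat_le_square (l : list Y) : ehat phi l <= length l * length l.
Proof.
  induction l as [|y l IHl]; simpl; [reflexivity|].
  pose proof (filter_length_le
    (fun z => if excluded_middle_informative (P2 phi y z) then false else true) l).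
  nia.
Qed.

Lemma ehat_value_le_alpha (n k : nat) : ehat_value phi n k -> k <= alpha phi n.
Proof.
  intros Hk.
  assert (Hmax : exists k, ehat_value phi n k /\ forall k', ehat_value phi n k' -> k' <= k).
  { apply (bounded_nat_pred_has_max _ (n * n) k Hk).
    intros k' (l & _ & <- & _ & <-). apply ehat_le_square. }
  apply (proj2 (epsilon_spec (inhabits 0) _ Hmax)), Hk.
Qed.

End Ehat.

Section Omega2Array.

Variables (X Y : Type) (phi : X -> Y -> Prop) (a : bool -> nat -> Y).
Hypothesis array : is_omega2_array phi a.

Lemma omega2_array_P1 (t : bool) (i : nat) : P1 phi (a t i).
Proof. exact (proj1 array t i). Qed.

Lemma omega2_array_P2 (t t' : bool) (i j : nat) :
  P2 phi (a t i) (a t' j) <-> (i = j -> t = t').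
Proof.
  rewrite (proj2 array [(t, i); (t', j)]). split.
  - intros H. apply (H (t, i) (t', j)); simpl; auto.
  - intros H p q [<-|[<-|[]]] [<-|[<-|[]]]; simpl; auto.
    intros e. symmetry. auto.
Qed.

Lemma omega2_array_column_not_P2 (i : nat) : ~ P2 phi (a true i) (a false i).
Proof. intros H. discriminate (proj1 (omega2_array_P2 true false i i) H eq_refl). Qed.

(* If a^t_i = a^t'_j with i <> j, then a^t'_j would be consistent with its
   column partner a^(negb t')_j. *)
Lemma omega2_array_inj (t t' : bool) (i j : nat) : a t i = a t' j -> t = t' /\ i = j.
Proof.
  intros E. destruct (Nat.eq_dec i j) as [<-|Hij].
  - split; [|reflexivity].
    apply (omega2_array_P2 t t' i i); [|reflexivity].
    rewrite <- E. apply P2_refl, omega2_array_P1.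
  - exfalso.
    assert (H : P2 phi (a t i) (a (negb t') j)) by (apply omega2_array_P2; lia).
    rewrite E in H. destruct t'; discriminate (proj1 (omega2_array_P2 _ _ j j) H eq_refl).
Qed.

Fixpoint columns (m : nat) : list Y :=
  match m with
  | 0 => []
  | S m' => a true m' :: a false m' :: columns m'
  end.

Lemma in_columns (m : nat) (y : Y) : In y (columns m) -> exists t i, i < m /\ y = a t i.
Proof.
  induction m as [|m IHm]; simpl; [tauto|].
  intros [<-|[<-|Hin]]; [exists true, m|exists false, m|]; try (split; [lia|reflexivity]).
  destruct (IHm Hin) as (t & i & ? & ?). exists t, i; split; [lia|assumption].
Qed.

Lemma notin_columns (t : bool) (m : nat) : ~ In (a t m) (columns m).
Proof.
  intros Hin. destruct (in_columns m _ Hin) as (t' & i & lt & E).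
  apply omega2_array_inj in E. lia.
Qed.

Lemma columns_length (m : nat) : length (columns m) = 2 * m.
Proof. induction m; simpl; lia. Qed.

Lemma columns_NoDup (m : nat) : NoDup (columns m).
Proof.
  induction m as [|m IHm]; simpl; constructor.
  - intros [E|Hin]; [|exact (notin_columns true m Hin)].
    apply omega2_array_inj in E. destruct E; discriminate.
  - constructor; [apply notin_columns|exact IHm].
Qed.

Lemma columns_P1 (m : nat) : Forall (P1 phi) (columns m).
Proof.
  induction m; simpl; repeat constructor; auto using omega2_array_P1.
Qed.

Lemma columns_ehat (m : nat) : m <= ehat phi (columns m).
Proof.
  induction m as [|m IHm]; simpl columns; [lia|].
  eapply Nat.le_trans; [|apply ehat_cons2_not_P2, omega2_array_column_not_P2]. lia.
Qed.

Lemma omega2_array_ehat_witness (n : nat) :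
  exists l, NoDup l /\ length l = n /\ Forall (P1 phi) l /\ n / 2 <= ehat phi l.
Proof.
  destruct (Nat.Even_or_Odd n) as [[m ->]|[m ->]].
  - replace (2 * m / 2) with m by (rewrite Nat.mul_comm, Nat.div_mul; lia).
    exists (columns m).
    auto using columns_NoDup, columns_length, columns_P1, columns_ehat.
  - replace ((2 * m + 1) / 2) with m by (rewrite Nat.add_comm, Nat.mul_comm, Nat.div_add by lia; reflexivity).
    exists (a true m :: columns m). repeat split.
    + constructor; [apply notin_columns|apply columns_NoDup].
    + simpl. rewrite columns_length. lia.
    + constructor; [apply omega2_array_P1|apply columns_P1].
    + eapply Nat.le_trans; [apply columns_ehat|apply ehat_le_cons].
Qed.

End Omega2Array.

Theorem mainTheorem10 (X Y : Type) (phi : X -> Y -> Prop) :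
  has_negation_instances phi ->
  has_omega2_array phi ->
  forall n : nat, n / 2 <= alpha phi n.
Proof.
  intros _ [a array] n.
  destruct (omega2_array_ehat_witness X Y phi a array n)
    as (l & nodup & len & inP1 & bound).
  eapply Nat.le_trans; [exact bound|].
  apply ehat_value_le_alpha. exists l. auto.
Qed.
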